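(* Let $d\ge2$ be even, $\epsilon>0$ and $B>0$. Then the mechanism $\mathcal{M}_{\alpha_0,B}$ with $\alpha_0=\frac{e^\epsilon}{e^\epsilon+1}$ does not satisfy $\epsilon$-local differential privacy on the input domain $[-1,1]^d$.
   Context: For $B>0$ and $v\in\{-1,1\}^d$ let $T^+(v)=\{y\in\{-B,B\}^d: y\cdot v>0\}$, $T^-(v)=\{y\in\{-B,B\}^d: y\cdot v\le 0\}$. For $\alpha\in[0,1]$, $\mathcal{M}_{\alpha,B}$ takes $x\in[-1,1]^d$, samples $V\in\{-1,1\}^d$ with independent coordinates $\mathbb{P}[V_j=\pm1]=\frac12\pm\frac12x_j$, independently samples $u\in\{0,1\}$ with $\mathbb{P}[u=1]=\alpha$, and outputs a uniformly random element of $T^+(V)$ if $u=1$ and of $T^-(V)$ if $u=0$. A mechanism $\mathcal{M}$ satisfies $\epsilon$-local differential privacy if for all inputs $x,x'$ and all sets $\mathcal{Y}$ of outputs, $\mathbb{P}[\mathcal{M}(x)\in\mathcal{Y}]\le e^\epsilon\mathbb{P}[\mathcal{M}(x')\in\mathcal{Y}]$. *)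

From mathcomp Require Import all_boot.
From Stdlib Require Import Reals.
Set Implicit Arguments. Unset Strict Implicit. Unset Printing Implicit Defensive.

(* Sign vectors in {-1,1}^d are encoded as boolean functions ('true' = +1). *)
Definition sgnvec (d : nat) := {ffun 'I_d -> bool}.

Definition vcoord (d : nat) (v : sgnvec d) (j : 'I_d) : R :=
  if v j then 1%R else (-1)%R.

(* Outputs y in {-B,B}^d are encoded as boolean functions s, with
   y_j = B if s j, and y_j = -B otherwise (a bijection since B > 0). *)
Definition ycoord (d : nat) (B : R) (s : sgnvec d) (j : 'I_d) : R :=
  if s j then B else (- B)%R.

Definition dotyv (d : nat) (B : R) (s v : sgnvec d) : R :=
  \big[Rplus/0%R]_(j < d) (ycoord B s j * vcoord v j)%R.

Definition inTplus (d : nat) (B : R) (v s : sgnvec d) : bool :=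
  if Rlt_dec 0%R (dotyv B s v) then true else false.

Definition Tplus (d : nat) (B : R) (v : sgnvec d) : {set sgnvec d} :=
  [set s | inTplus B v s].
Definition Tminus (d : nat) (B : R) (v : sgnvec d) : {set sgnvec d} :=
  [set s | ~~ inTplus B v s].

(* P[V = v] where the V_j are independent with P[V_j = +-1] = 1/2 +- x_j/2 *)
Definition probV (d : nat) (x : 'I_d -> R) (v : sgnvec d) : R :=
  \big[Rmult/1%R]_(j < d)
     (if v j then (1/2 + x j / 2)%R else (1/2 - x j / 2)%R).

(* P[M_{alpha,B}(x) = y]: with prob. alpha uniform on T^+(V), otherwise
   uniform on T^-(V). *)
Definition probM (d : nat) (alpha B : R) (x : 'I_d -> R) (s : sgnvec d) : R :=
  \big[Rplus/0%R]_(v : sgnvec d)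
    (probV x v *
      (alpha * (if s \in Tplus B v then / INR #|Tplus B v| else 0)
       + (1 - alpha) * (if s \in Tminus B v then / INR #|Tminus B v| else 0)))%R.

Definition probMset (d : nat) (alpha B : R) (x : 'I_d -> R) (Y : {set sgnvec d}) : R :=
  \big[Rplus/0%R]_(s in Y) probM alpha B x s.

Definition in_cube (d : nat) (x : 'I_d -> R) : Prop :=
  forall j, (-1 <= x j <= 1)%R.

Definition LDP (d : nat) (alpha B eps : R) : Prop :=
  forall x x' : 'I_d -> R, in_cube x -> in_cube x' ->
  forall Y : {set sgnvec d},
    (probMset alpha B x Y <= exp eps * probMset alpha B x' Y)%R.

(* Feed the mechanism the two opposite cube vertices x = (1,..,1)
   and x' = (-1,..,-1) and look at the single output y = (B,..,B).  On a vertex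
   w the sign vector V equals w almost surely (probV_vertex), so the output law
   is explicit (probM_vertex):
     P[M(x)  = y] = alpha0 / |T^+(1)|,   P[M(x') = y] = (1-alpha0) / |T^-(-1)|.
   Since e^eps (1 - alpha0) = alpha0 (alpha0_balance), eps-LDP would force
   |T^-(-1)| <= |T^+(1)|.  But T^-(-w) = {y | y.w >= 0} contains T^+(w), and
   for even d the alternating vector (B,-B,B,-B,..) is orthogonal to (1,..,1),
   so the inclusion T^+(1) <= T^-(-1) is strict (Tplus_proper_Tminus_opp). *)
From HB Require Import structures.
From mathcomp Require Import all_boot.
From Stdlib Require Import Reals Lra.

Set Implicit Arguments.

Lemma Rplus_left_id : left_id 0%R Rplus. Proof. by move=> x; lra. Qed.
Lemma Rplus_assoc_law : associative Rplus. Proof. by move=> x y z; lra. Qed.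
Lemma Rplus_comm_law : commutative Rplus. Proof. by move=> x y; lra. Qed.
HB.instance Definition _ :=
  Monoid.isComLaw.Build R 0%R Rplus Rplus_assoc_law Rplus_comm_law Rplus_left_id.
Lemma Rmult_left_id : left_id 1%R Rmult. Proof. by move=> x; lra. Qed.
Lemma Rmult_assoc_law : associative Rmult. Proof. by move=> x y z; ring. Qed.
Lemma Rmult_comm_law : commutative Rmult. Proof. by move=> x y; ring. Qed.
HB.instance Definition _ :=
  Monoid.isComLaw.Build R 1%R Rmult Rmult_assoc_law Rmult_comm_law Rmult_left_id.

Lemma big_Rplus_const n (c : R) : \big[Rplus/0%R]_(j < n) c = (INR n * c)%R.
Proof.
elim: n => [|n IH]; first by rewrite big_ord0 /=; lra.
rewrite big_ord_recr /= IH; case: n {IH} => [|n] /=; lra.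
Qed.

Section DotProducts.
Variables (d : nat) (B : R).

Definition constv (c : bool) : sgnvec d := [ffun _ => c].
Definition negv (v : sgnvec d) : sgnvec d := [ffun j => ~~ v j].

Lemma dotyv_negv (s v : sgnvec d) : dotyv B s (negv v) = (- dotyv B s v)%R.
Proof.
rewrite /dotyv; apply: (big_ind2 (fun a b => a = - b)%R); first lra.
  by move=> a b a' b' -> ->; lra.
by move=> j _; rewrite /vcoord ffunE; case: (v j) => /=; lra.
Qed.

Lemma dotyv_self (v : sgnvec d) : dotyv B v v = (INR d * B)%R.
Proof.
rewrite /dotyv -big_Rplus_const; apply: eq_bigr => j _.
by rewrite /ycoord /vcoord; case: (v j); lra.
Qed.

Definition altv : sgnvec d := [ffun j : 'I_d => odd j].

Lemma dotyv_altv : ~~ odd d -> dotyv B altv (constv true) = 0%R.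
Proof.
move=> even_d; rewrite /dotyv.
rewrite (eq_bigr (fun j : 'I_d => if odd j then B else - B)%R); last first.
  by move=> j _; rewrite /ycoord /vcoord !ffunE; case: (odd j); lra.
rewrite -(big_mkord xpredT (fun j => if odd j then B else - B)%R).
rewrite -[d](odd_double_half d) (negbTE even_d) add0n.
elim: d./2 => [|m IH]; first by rewrite big_nil.
by rewrite doubleS !big_nat_recr //= IH odd_double /=; lra.
Qed.

Lemma self_in_Tplus (v : sgnvec d) : (0 < d)%N -> (0 < B)%R -> v \in Tplus B v.
Proof.
move=> /ltP d_pos B_pos; have dB_pos := Rmult_lt_0_compat _ _ (lt_0_INR _ d_pos) B_pos.
by rewrite inE /inTplus dotyv_self; case: Rlt_dec.
Qed.

Lemma Tplus_sub_Tminus_negv (w : sgnvec d) : Tplus B w \subset Tminus B (negv w).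
Proof.
apply/subsetP => s; rewrite !inE /inTplus dotyv_negv.
by case: Rlt_dec => // pos _; case: Rlt_dec => // neg; lra.
Qed.

(* In even dimension the inclusion is strict for w = (1,..,1): the
   alternating output lies on the hyperplane y.w = 0. *)
Lemma Tplus_proper_Tminus_opp :
  ~~ odd d -> Tplus B (constv true) \proper Tminus B (negv (constv true)).
Proof.
move=> even_d; apply/properP; split; first exact: Tplus_sub_Tminus_negv.
by exists altv; rewrite !inE /inTplus ?dotyv_negv dotyv_altv //;
  case: Rlt_dec => // pos; lra.
Qed.

End DotProducts.

Lemma probV_vertex d (w v : sgnvec d) :
  probV (vcoord w) v = if v == w then 1%R else 0%R.
Proof.
rewrite /probV; case: eqP => [->|v_neq_w].
  apply: (big_ind (fun a => a = 1%R)) => //; first by move=> a b -> ->; lra.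
  by move=> j _; rewrite /vcoord; case: (w j); lra.
have [j vj_neq_wj] : exists j, v j != w j.
  apply/existsP; apply: contraT; rewrite negb_exists => /forallP eq_vw.
  by case: v_neq_w; apply/ffunP => j; apply/eqP; rewrite -[_ == _]negbK eq_vw.
rewrite (bigD1 j) //= /vcoord.
by move: vj_neq_wj; case: (v j); case: (w j) => //= _; lra.
Qed.

Lemma probM_vertex d alpha B (w s : sgnvec d) :
  probM alpha B (vcoord w) s =
  (alpha * (if s \in Tplus B w then / INR #|Tplus B w| else 0)
   + (1 - alpha) * (if s \in Tminus B w then / INR #|Tminus B w| else 0))%R.
Proof.
rewrite /probM (bigD1 w) //= probV_vertex eqxx big1; first by ring.
by move=> v /negbTE v_neq_w; rewrite probV_vertex v_neq_w; ring.
Qed.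

Lemma in_cube_vertex d (w : sgnvec d) : in_cube (vcoord w).
Proof. by move=> j; rewrite /vcoord; case: (w j); lra. Qed.

Lemma alpha0_balance eps :
  (exp eps * (1 - exp eps / (exp eps + 1)) = exp eps / (exp eps + 1))%R.
Proof. by have e_pos := exp_pos eps; field; lra. Qed.

Lemma uniform_mass_lt (a b : nat) (alpha : R) :
  (0 < alpha)%R -> (0 < a)%N -> (a < b)%N -> (alpha * / INR b < alpha * / INR a)%R.
Proof.
move=> alpha_pos /ltP a_pos /ltP a_lt_b.
have a_posR := lt_0_INR _ a_pos; have a_lt_bR := lt_INR _ _ a_lt_b.
apply: Rmult_lt_compat_l => //; apply: Rinv_lt_contravar => //.
by apply: Rmult_lt_0_compat; lra.
Qed.

Theorem mainTheorem15 (d : nat) (eps B : R) :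
  (2 <= d)%N -> ~~ odd d -> (0 < eps)%R -> (0 < B)%R ->
  ~ LDP d (exp eps / (exp eps + 1))%R B eps.
Proof.
move=> d_ge2 even_d _ B_pos ldp.
set one := constv d true; set alpha0 := (exp eps / (exp eps + 1))%R.
have one_in_Tplus : one \in Tplus B one := self_in_Tplus one (ltnW d_ge2) B_pos.
have one_in_Tminus_opp : one \in Tminus B (negv one).
  exact: (subsetP (Tplus_sub_Tminus_negv B one)).
have one_notin_Tminus : one \notin Tminus B one.
  by move: one_in_Tplus; rewrite !inE negbK.
have one_notin_Tplus_opp : one \notin Tplus B (negv one).
  by move: one_in_Tminus_opp; rewrite !inE.
have := ldp _ _ (in_cube_vertex one) (in_cube_vertex (negv one)) [set one].
rewrite /probMset !big_set1 !probM_vertex one_in_Tplus one_in_Tminus_opp.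
rewrite (negbTE one_notin_Tminus) (negbTE one_notin_Tplus_opp).
rewrite Rmult_0_r Rplus_0_r Rmult_0_r Rplus_0_l.
rewrite -Rmult_assoc alpha0_balance -/alpha0.
apply: Rlt_not_le; apply: uniform_mass_lt.
- by have e_pos := exp_pos eps; apply: Rdiv_lt_0_compat; lra.
- by apply/card_gt0P; exists one.
- by apply: proper_card; apply: Tplus_proper_Tminus_opp.
Qed.
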